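(* In the two-player zero-sum setting and algorithm SBMM described in the context, for every $h\in[H]$, $s\in\mathcal{S}$ and any fixed vectors $\underline{V}_{h+1},\overline{V}_{h+1}\in\mathbb{R}^{\mathcal{S}}$, the function $(\mu,\nu)\mapsto\underline{V}_h^{\mu,\nu}(s)$ on $\Delta(\mathcal{A})\times\Delta(\mathcal{B})$ is concave in $\mu$ for each fixed $\nu$ and concave in $\nu$ for each fixed $\mu$, and the function $(\mu,\nu)\mapsto\overline{V}_h^{\mu,\nu}(s)$ is convex in $\mu$ for each fixed $\nu$ and convex in $\nu$ for each fixed $\mu$.
   Context: Two-player zero-sum episodic Markov game: finite state space $\mathcal{S}$ ($|\mathcal{S}|=S$), max-player actions $\mathcal{A}$ ($|\mathcal{A}|=A$), min-player actions $\mathcal{B}$ ($|\mathcal{B}|=B$), horizon $H$. Offline dataset $\mathcal{D}=\{(s_h^k,a_h^k,b_h^k,r_h^k,s_{h+1}^k)\}_{h\in[H],k\in[n]}$. Let $n_h(s,a,b)=\#\{k:(s_h^k,a_h^k,b_h^k)=(s,a,b)\}$, $\mathcal{K}_h(s)=\{(a,b):n_h(s,a,b)\neq0\}$; for $n_h(s,a,b)>0$, $\widehat{r}_h(s,a,b)$ is the average of $r_h^k$ and $\widehat{P}_h(s'|s,a,b)$ the empirical frequency of $s_{h+1}^k=s'$ over those $k$; otherwise both are $0$. $\mathcal{N}(\Pi)>0$ is a fixed number (a covering number of a strategy class) and $\iota=32\log(2ABSHn/\delta)$. The bonus is $b_h(s,\mu,\nu)=H\sqrt{\sum_{(a,b)\in\mathcal{K}_h(s)}\frac{\mu(a)^2\nu(b)^2}{n_h(s,a,b)}\log(\mathcal{N}(\Pi))\iota}+\sqrt{\iota}/n$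 for $\mu\in\Delta(\mathcal{A}),\nu\in\Delta(\mathcal{B})$. Define $\underline{Q}_h(s,a,b)=\widehat{r}_h(s,a,b)+\sum_{s'}\widehat{P}_h(s'|s,a,b)\underline{V}_{h+1}(s')$, $\underline{V}_h^{\mu,\nu}(s)=\sum_{a,b}\mu(a)\nu(b)\underline{Q}_h(s,a,b)-b_h(s,\mu,\nu)$, $\overline{Q}_h(s,a,b)=\widehat{r}_h(s,a,b)+\sum_{s'}\widehat{P}_h(s'|s,a,b)\overline{V}_{h+1}(s')+H\mathbf{1}\{(a,b)\notin\mathcal{K}_h(s)\}$, $\overline{V}_h^{\mu,\nu}(s)=\sum_{a,b}\mu(a)\nu(b)\overline{Q}_h(s,a,b)+b_h(s,\mu,\nu)$. *)

From HB Require Import structures.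
From mathcomp Require Import all_boot all_order all_algebra.
From mathcomp Require Import reals exp.
Set Implicit Arguments. Unset Strict Implicit. Unset Printing Implicit Defensive.
Import Order.TTheory GRing.Theory Num.Theory.
Local Open Scope ring_scope.

(* Offline dataset, step index h : 'I_H (0-based), episode index k : 'I_n.
   For step h and episode k:  (dS h k, dA h k, dB h k, dR h k, dS' h k)
   = (s_h^k, a_h^k, b_h^k, r_h^k, s_{h+1}^k). *)
Section SBMM.
Variables (R : realType) (S A B : finType) (H n : nat).
Variables (dS : 'I_H -> 'I_n -> S) (dA : 'I_H -> 'I_n -> A)
          (dB : 'I_H -> 'I_n -> B) (dR : 'I_H -> 'I_n -> R)
          (dS' : 'I_H -> 'I_n -> S).

Definition cnt (h : 'I_H) (s : S) (a : A) (b : B) : nat :=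
  #|[set k : 'I_n | (dS h k == s) && (dA h k == a) && (dB h k == b)]|.

Definition inK (h : 'I_H) (s : S) (a : A) (b : B) : bool := cnt h s a b != 0%N.

Definition rhat (h : 'I_H) (s : S) (a : A) (b : B) : R :=
  if inK h s a b then
    (\sum_(k : 'I_n | (dS h k == s) && (dA h k == a) && (dB h k == b)) dR h k)
      / (cnt h s a b)%:R
  else 0.

Definition Phat (h : 'I_H) (s : S) (a : A) (b : B) (s' : S) : R :=
  if inK h s a b then
    #|[set k : 'I_n | (dS h k == s) && (dA h k == a) && (dB h k == b)
                       && (dS' h k == s')]|%:R / (cnt h s a b)%:R
  else 0.

Definition iota (delta : R) : R :=
  32 * ln (2 * #|A|%:R * #|B|%:R * #|S|%:R * H%:R * n%:R / delta).

(* bonus b_h(s, mu, nu) ; NPi is the covering number N(Pi) *)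
Definition bonus (NPi delta : R) (h : 'I_H) (s : S)
    (mu : {ffun A -> R}) (nu : {ffun B -> R}) : R :=
  H%:R * Num.sqrt ((\sum_(a : A) \sum_(b : B | inK h s a b)
                      mu a ^+ 2 * nu b ^+ 2 / (cnt h s a b)%:R)
                   * ln NPi * iota delta)
  + Num.sqrt (iota delta) / n%:R.

Definition Qlow (Vlow' : {ffun S -> R}) (h : 'I_H) (s : S) (a : A) (b : B) : R :=
  rhat h s a b + \sum_(s' : S) Phat h s a b s' * Vlow' s'.

Definition Qup (Vup' : {ffun S -> R}) (h : 'I_H) (s : S) (a : A) (b : B) : R :=
  rhat h s a b + \sum_(s' : S) Phat h s a b s' * Vup' s'
  + H%:R * (if inK h s a b then 0 else 1).

Definition Vlow (NPi delta : R) (Vlow' : {ffun S -> R}) (h : 'I_H) (s : S)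
    (mu : {ffun A -> R}) (nu : {ffun B -> R}) : R :=
  \sum_(a : A) \sum_(b : B) mu a * nu b * Qlow Vlow' h s a b
  - bonus NPi delta h s mu nu.

Definition Vup (NPi delta : R) (Vup' : {ffun S -> R}) (h : 'I_H) (s : S)
    (mu : {ffun A -> R}) (nu : {ffun B -> R}) : R :=
  \sum_(a : A) \sum_(b : B) mu a * nu b * Qup Vup' h s a b
  + bonus NPi delta h s mu nu.
End SBMM.

Definition simplex (R : realType) (T : finType) (p : {ffun T -> R}) : Prop :=
  (forall x, 0 <= p x) /\ \sum_(x : T) p x = 1.

Definition cvxcomb (R : realType) (T : finType) (t : R) (p q : {ffun T -> R})
  : {ffun T -> R} := [ffun x => t * p x + (1 - t) * q x].

Definition concave_on_simplex (R : realType) (T : finType)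
    (f : {ffun T -> R} -> R) : Prop :=
  forall p q t, simplex p -> simplex q -> 0 <= t <= 1 ->
    t * f p + (1 - t) * f q <= f (cvxcomb t p q).

Definition convex_on_simplex (R : realType) (T : finType)
    (f : {ffun T -> R} -> R) : Prop :=
  forall p q t, simplex p -> simplex q -> 0 <= t <= 1 ->
    f (cvxcomb t p q) <= t * f p + (1 - t) * f q.

From Pilot Require Import Defs.
From mathcomp Require Import all_boot all_order all_algebra.
From mathcomp Require Import reals exp.
From mathcomp Require Import ring lra.
Set Implicit Arguments. Unset Strict Implicit. Unset Printing Implicit Defensive.
Import Order.TTheory GRing.Theory Num.Theory.
Local Open Scope ring_scope.

(* For fixed nu, the bonus is an affine function of a weighted Euclidean norm
   of mu (weights sum_b nu(b)^2 / n_h(s,a,b)), and symmetrically in nu; such a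
   norm is convex by Cauchy-Schwarz.  The bilinear part sum mu(a) nu(b) Q(a,b)
   is affine in each argument, so subtracting (resp. adding) the bonus gives a
   concave (resp. convex) function. *)

Section WeightedNorm.
Variables (R : rcfType) (I : finType) (w : I -> R).
Hypothesis w_ge0 : forall i, 0 <= w i.

Definition wnorm (x : I -> R) : R := Num.sqrt (\sum_i x i ^+ 2 * w i).

Lemma wnorm_ge0 (x : I -> R) : 0 <= wnorm x.
Proof. exact: sqrtr_ge0. Qed.

Lemma wsum_sqr_ge0 (x : I -> R) : 0 <= \sum_i x i ^+ 2 * w i.
Proof. by apply: sumr_ge0 => i _; rewrite mulr_ge0 ?sqr_ge0. Qed.

Lemma sqr_wnorm (x : I -> R) : wnorm x ^+ 2 = \sum_i x i ^+ 2 * w i.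
Proof. by rewrite sqr_sqrtr ?wsum_sqr_ge0. Qed.

Lemma wnorm_mul_sqrt (x : I -> R) (k : R) :
  Num.sqrt ((\sum_i x i ^+ 2 * w i) * k) = wnorm x * Num.sqrt k.
Proof. by rewrite sqrtrM ?wsum_sqr_ge0. Qed.

Lemma wdot_wnorm0 (x y : I -> R) : wnorm x = 0 -> \sum_i x i * y i * w i = 0.
Proof.
move/eqP; rewrite sqrtr_eq0 => Xle0.
have X0 : \sum_i x i ^+ 2 * w i = 0 by apply/eqP; rewrite eq_le Xle0 wsum_sqr_ge0.
have x2w0 i : x i ^+ 2 * w i = 0.
  by apply: (psumr_eq0P _ X0) => // j _; rewrite mulr_ge0 ?sqr_ge0.
apply: big1 => i _; apply/eqP; rewrite -sqrf_eq0.
have -> : (x i * y i * w i) ^+ 2 = x i ^+ 2 * w i * (y i ^+ 2 * w i) by ring.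
by rewrite x2w0 mul0r.
Qed.

Lemma wdot_le_wnorm (x y : I -> R) : \sum_i x i * y i * w i <= wnorm x * wnorm y.
Proof.
set a := wnorm x; set b := wnorm y.
have [ab0|ab_neq0] := eqVneq (a * b) 0.
  rewrite ab0; have /orP[/eqP a0|/eqP b0] : (a == 0) || (b == 0) by rewrite -mulf_eq0 ab0.
    by rewrite wdot_wnorm0.
  by rewrite (eq_bigr (fun i => y i * x i * w i)) ?wdot_wnorm0 // => i _; rewrite (mulrC (x i)).
have ab_gt0 : 0 < 2 * (a * b).
  by rewrite mulr_gt0 // lt_def ab_neq0 mulr_ge0 ?wnorm_ge0.
(* termwise AM-GM between (b x_i)^2 and (a y_i)^2 *)
have amgm i : 2 * (a * b) * (x i * y i * w i) <=
              b ^+ 2 * (x i ^+ 2 * w i) + a ^+ 2 * (y i ^+ 2 * w i).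
  rewrite -subr_ge0.
  have -> : b ^+ 2 * (x i ^+ 2 * w i) + a ^+ 2 * (y i ^+ 2 * w i)
            - 2 * (a * b) * (x i * y i * w i) = w i * (b * x i - a * y i) ^+ 2.
    by ring.
  by rewrite mulr_ge0 ?sqr_ge0.
have := ler_sum (index_enum I) (fun i (_ : predT i) => amgm i).
rewrite -mulr_sumr big_split /= -!mulr_sumr -!sqr_wnorm -/a -/b.
have -> : b ^+ 2 * a ^+ 2 + a ^+ 2 * b ^+ 2 = 2 * (a * b) * (a * b) by ring.
by rewrite ler_pM2l.
Qed.

Lemma wnorm_cvxcomb (x y : I -> R) (t : R) : 0 <= t <= 1 ->
  wnorm (fun i => t * x i + (1 - t) * y i) <= t * wnorm x + (1 - t) * wnorm y.
Proof.
move=> /andP[t_ge0 t_le1].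
have rhs_ge0 : 0 <= t * wnorm x + (1 - t) * wnorm y.
  by rewrite addr_ge0 ?mulr_ge0 ?wnorm_ge0 ?subr_ge0.
rewrite -(ger0_norm rhs_ge0) -sqrtr_sqr ler_sqrt ?sqr_ge0 // -subr_ge0.
have -> : \sum_i (t * x i + (1 - t) * y i) ^+ 2 * w i =
    t ^+ 2 * wnorm x ^+ 2 + 2 * t * (1 - t) * (\sum_i x i * y i * w i)
    + (1 - t) ^+ 2 * wnorm y ^+ 2.
  by rewrite !sqr_wnorm !mulr_sumr -!big_split; apply: eq_bigr => i _ /=; ring.
set D := \sum_i x i * y i * w i.
have -> : (t * wnorm x + (1 - t) * wnorm y) ^+ 2 -
    (t ^+ 2 * wnorm x ^+ 2 + 2 * t * (1 - t) * D + (1 - t) ^+ 2 * wnorm y ^+ 2)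
    = 2 * t * (1 - t) * (wnorm x * wnorm y - D) by ring.
by rewrite !mulr_ge0 ?subr_ge0 ?wdot_le_wnorm.
Qed.

End WeightedNorm.

Section ConvexOnSimplex.
Variables (R : realType) (T : finType).
Implicit Types (p q : {ffun T -> R}) (f g : {ffun T -> R} -> R).

Definition affine_cvxcomb f :=
  forall t p q, f (cvxcomb t p q) = t * f p + (1 - t) * f q.

Lemma concave_on_simplexB f g : affine_cvxcomb f -> convex_on_simplex g ->
  concave_on_simplex (fun p => f p - g p).
Proof.
move=> f_aff g_cvx p q t sp sq t01; rewrite f_aff.
by have := g_cvx p q t sp sq t01; lra.
Qed.

Lemma convex_on_simplexD f g : affine_cvxcomb f -> convex_on_simplex g ->
  convex_on_simplex (fun p => f p + g p).
Proof.
move=> f_aff g_cvx p q t sp sq t01; rewrite f_aff.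
by have := g_cvx p q t sp sq t01; lra.
Qed.

Lemma convex_on_simplex_wnorm (w : T -> R) (k c : R) :
  (forall i, 0 <= w i) -> 0 <= k ->
  convex_on_simplex (fun p => k * wnorm w p + c).
Proof.
move=> w_ge0 k_ge0 p q t _ _ t01.
have -> : wnorm w (cvxcomb t p q) = wnorm w (fun i => t * p i + (1 - t) * q i).
  by rewrite /wnorm; under eq_bigr do rewrite ffunE.
have := ler_wpM2l k_ge0 (wnorm_cvxcomb w_ge0 p q t01).
by lra.
Qed.

End ConvexOnSimplex.

Section Bilinear.
Variables (R : realType) (A B : finType) (F : A -> B -> R).

Lemma bilin_cvxcombl (nu : {ffun B -> R}) :
  affine_cvxcomb (fun mu => \sum_a \sum_b mu a * nu b * F a b).
Proof.
move=> t p q; rewrite !mulr_sumr -big_split; apply: eq_bigr => a _.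
by rewrite !mulr_sumr -big_split; apply: eq_bigr => b _ /=; rewrite ffunE; ring.
Qed.

Lemma bilin_cvxcombr (mu : {ffun A -> R}) :
  affine_cvxcomb (fun nu => \sum_a \sum_b mu a * nu b * F a b).
Proof.
move=> t p q; rewrite !mulr_sumr -big_split; apply: eq_bigr => a _.
by rewrite !mulr_sumr -big_split; apply: eq_bigr => b _ /=; rewrite ffunE; ring.
Qed.

End Bilinear.

Section SBMMBonus.
Variables (R : realType) (S A B : finType) (H n : nat).
Variables (dS : 'I_H -> 'I_n -> S) (dA : 'I_H -> 'I_n -> A)
          (dB : 'I_H -> 'I_n -> B).
Variables (NPi delta : R) (h : 'I_H) (s : S).

Local Notation inK := (inK dS dA dB h s).
Local Notation cnt := (cnt dS dA dB h s).
Local Notation bonus := (bonus dS dA dB NPi delta h s).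
Local Notation bonus_scale :=
  (H%:R * Num.sqrt (ln NPi * Defs.iota S A B H n delta)).
Local Notation bonus_shift := (Num.sqrt (Defs.iota S A B H n delta) / n%:R).

Definition bonus_weightA (nu : {ffun B -> R}) (a : A) : R :=
  \sum_(b | inK a b) nu b ^+ 2 / (cnt a b)%:R.

Definition bonus_weightB (mu : {ffun A -> R}) (b : B) : R :=
  \sum_(a | inK a b) mu a ^+ 2 / (cnt a b)%:R.

Lemma bonus_weightA_ge0 nu a : 0 <= bonus_weightA nu a.
Proof. by apply: sumr_ge0 => b _; rewrite divr_ge0 ?sqr_ge0. Qed.

Lemma bonus_weightB_ge0 mu b : 0 <= bonus_weightB mu b.
Proof. by apply: sumr_ge0 => a _; rewrite divr_ge0 ?sqr_ge0. Qed.

Lemma bonus_scale_ge0 : 0 <= bonus_scale.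
Proof. by rewrite mulr_ge0 ?sqrtr_ge0. Qed.

Lemma bonusE_wnormA mu nu :
  bonus mu nu = bonus_scale * wnorm (bonus_weightA nu) mu + bonus_shift.
Proof.
rewrite /bonus -mulrA.
have -> : \sum_a \sum_(b | inK a b) mu a ^+ 2 * nu b ^+ 2 / (cnt a b)%:R =
          \sum_a mu a ^+ 2 * bonus_weightA nu a.
  by apply: eq_bigr => a _; rewrite mulr_sumr; apply: eq_bigr => b _; rewrite mulrA.
by rewrite (wnorm_mul_sqrt (bonus_weightA_ge0 nu)); congr (_ + _); ring.
Qed.

Lemma bonusE_wnormB mu nu :
  bonus mu nu = bonus_scale * wnorm (bonus_weightB mu) nu + bonus_shift.
Proof.
rewrite /bonus -mulrA.
have -> : \sum_a \sum_(b | inK a b) mu a ^+ 2 * nu b ^+ 2 / (cnt a b)%:R =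
          \sum_b nu b ^+ 2 * bonus_weightB mu b.
  rewrite (exchange_big_dep predT) //=; apply: eq_bigr => b _.
  by rewrite mulr_sumr; apply: eq_bigr => a _; rewrite mulrA (mulrC (nu b ^+ 2)).
by rewrite (wnorm_mul_sqrt (bonus_weightB_ge0 mu)); congr (_ + _); ring.
Qed.

Lemma bonus_convexA nu : convex_on_simplex (fun mu => bonus mu nu).
Proof.
move=> p q t sp sq t01; rewrite !bonusE_wnormA.
exact: (convex_on_simplex_wnorm _ (bonus_weightA_ge0 nu) bonus_scale_ge0).
Qed.

Lemma bonus_convexB mu : convex_on_simplex (fun nu => bonus mu nu).
Proof.
move=> p q t sp sq t01; rewrite !bonusE_wnormB.
exact: (convex_on_simplex_wnorm _ (bonus_weightB_ge0 mu) bonus_scale_ge0).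
Qed.

End SBMMBonus.

Theorem proposition2 (R : realType) (S A B : finType) (H n : nat)
    (dS : 'I_H -> 'I_n -> S) (dA : 'I_H -> 'I_n -> A)
    (dB : 'I_H -> 'I_n -> B) (dR : 'I_H -> 'I_n -> R)
    (dS' : 'I_H -> 'I_n -> S)
    (NPi delta : R) (hNPi : 0 < NPi) (hdelta : 0 < delta)
    (h : 'I_H) (s : S) (Vlow' Vup' : {ffun S -> R}) :
  (forall nu : {ffun B -> R}, simplex nu ->
     concave_on_simplex
       (fun mu => Vlow dS dA dB dR dS' NPi delta Vlow' h s mu nu)) /\
  (forall mu : {ffun A -> R}, simplex mu ->
     concave_on_simplex
       (fun nu => Vlow dS dA dB dR dS' NPi delta Vlow' h s mu nu)) /\
  (forall nu : {ffun B -> R}, simplex nu ->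
     convex_on_simplex
       (fun mu => Vup dS dA dB dR dS' NPi delta Vup' h s mu nu)) /\
  (forall mu : {ffun A -> R}, simplex mu ->
     convex_on_simplex
       (fun nu => Vup dS dA dB dR dS' NPi delta Vup' h s mu nu)).
Proof.
rewrite /Vlow /Vup.
split; [|split; [|split]] => [nu _|mu _|nu _|mu _].
- by apply: concave_on_simplexB; [exact: bilin_cvxcombl | exact: bonus_convexA].
- by apply: concave_on_simplexB; [exact: bilin_cvxcombr | exact: bonus_convexB].
- by apply: convex_on_simplexD; [exact: bilin_cvxcombl | exact: bonus_convexA].
- by apply: convex_on_simplexD; [exact: bilin_cvxcombr | exact: bonus_convexB].
Qed.
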